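(* Let $\Phi(x,y)=-\phi(x-y)$ and let $f:\mathbb R^n\to\mathbb R$ be continuously differentiable. Then $f$ is a-weakly convex if and only if $f$ is left $\Phi$-convex.
   Context: Standing assumption: $\phi:\mathbb R^n\to\mathbb R$ is convex, finite-valued, differentiable and strictly convex (Legendre with full domain), super-coercive; $\phi^*$ has the same properties and $\nabla\phi^*=(\nabla\phi)^{-1}$. A proper lsc $f$ is a-weakly convex if for every $(\bar x,\bar v)\in\operatorname{graph}\partial f$ ($\partial f$ the limiting subdifferential): $f(x)\ge f(\bar x)-\phi(x-\bar x+\nabla\phi^*(-\bar v))+\phi(\nabla\phi^*(-\bar v))$ for all $x$. Left $\Phi$-convex: $f=\sup_{i\in I}\Phi(\cdot,y_i)-\beta_i$ for some family $(y_i,\beta_i)\in\mathbb R^n\times\overline{\mathbb R}$. *)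

From HB Require Import structures.
From mathcomp Require Import all_boot all_order all_algebra.
From mathcomp Require Import all_classical all_reals all_analysis.
Set Implicit Arguments. Unset Strict Implicit. Unset Printing Implicit Defensive.
Import Order.TTheory GRing.Theory Num.Theory.
Import numFieldNormedType.Exports.
Local Open Scope classical_set_scope.
Local Open Scope ring_scope.

Section Defs.
Variables (R : realType) (n : nat).
Local Notation V := 'rV[R]_n.

Definition dotv (u v : V) : R := \sum_(i < n) u ord0 i * v ord0 i.

Definition grad (f : V -> R) (x : V) : V :=
  \row_(i < n) ('d f x (delta_mx ord0 i : V)).

Definition C1 (f : V -> R) : Prop :=
  (forall x, differentiable f x) /\ continuous (grad f).

Definition convex_fun (f : V -> R) : Prop :=
  forall (x y : V) (t : R), 0 <= t <= 1 ->
    f (t *: x + (1 - t) *: y) <= t * f x + (1 - t) * f y.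

Definition strictly_convex_fun (f : V -> R) : Prop :=
  forall (x y : V) (t : R), x != y -> 0 < t < 1 ->
    f (t *: x + (1 - t) *: y) < t * f x + (1 - t) * f y.

(* super-coercive: f x / |x| -> +oo as |x| -> +oo *)
Definition supercoercive (f : V -> R) : Prop :=
  forall M : R, exists r : R, forall x : V, r < `|x| -> M * `|x| <= f x.

Definition fenchel_conj (f : V -> R) (v : V) : \bar R :=
  ereal_sup [set ((dotv v x - f x)%:E) | x in [set: V]].

(* convex, finite, differentiable, strictly convex (Legendre with full
   domain), super-coercive *)
Definition legendre_sc (f : V -> R) : Prop :=
  [/\ convex_fun f, (forall x, differentiable f x), strictly_convex_fun f
    & supercoercive f].

Definition standing (phi psi : V -> R) : Prop :=
  [/\ legendre_sc phi,
      (forall v, (psi v)%:E = fenchel_conj phi v),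
      legendre_sc psi,
      (forall x, grad psi (grad phi x) = x)
    & (forall v, grad phi (grad psi v) = v)].

Definition frechet_subgrad (f : V -> R) (x v : V) : Prop :=
  forall eps : R, 0 < eps ->
    \forall y \near x, f x + dotv v (y - x) - eps * `|y - x| <= f y.

Definition limiting_subgrad (f : V -> R) (x v : V) : Prop :=
  exists (xs vs : nat -> V),
    [/\ xs @ \oo --> x, (fun k => f (xs k)) @ \oo --> f x,
        vs @ \oo --> v & forall k, frechet_subgrad f (xs k) (vs k)].

(* a-weak convexity w.r.t. phi (psi = phi^* ) *)
Definition a_weakly_convex (phi psi : V -> R) (f : V -> R) : Prop :=
  forall xb vb : V, limiting_subgrad f xb vb ->
    forall x : V,
      f xb - phi (x - xb + grad psi (- vb)) + phi (grad psi (- vb)) <= f x.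

Definition left_Phi_convex (Phi : V -> V -> R) (f : V -> R) : Prop :=
  exists (I : Type) (y : I -> V) (beta : I -> \bar R),
    forall x : V,
      (f x)%:E = ereal_sup [set ((Phi x (y i))%:E - beta i)%E | i in [set: I]].

End Defs.

(* For a C^1 function the limiting subdifferential at xb is just {grad f xb}.
   If f is a-weakly convex, the inequality at each xb is a minorant
   x |-> -phi (x - y) - beta of f touching it at xb, so f is the supremum of
   these minorants.  Conversely, let f be such a supremum.  Supercoercivity of
   phi keeps the centres y of nearly active minorants at xb in a bounded set,
   and a cluster point ys of them yields the minorant
   x |-> f xb + phi (xb - ys) - phi (x - ys), which touches f at xb.  Hence
   grad f xb = - grad phi (xb - ys), and since grad psi inverts grad phi the
   weak convexity inequality at xb is exactly this minorant. *)
From HB Require Import structures.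
From mathcomp Require Import all_boot all_order all_algebra.
From mathcomp Require Import all_classical all_reals all_analysis.
From mathcomp Require Import lra.
Import Order.TTheory GRing.Theory Num.Theory.
Set Implicit Arguments. Unset Strict Implicit.
Import numFieldNormedType.Exports.
Local Open Scope classical_set_scope.
Local Open Scope ring_scope.

Lemma normr_le_of_linear_minorant (R : realFieldType) (w e d : R) : 0 < d ->
  (forall t, `|t| < d -> - (e * `|t|) <= t * w) -> `|w| <= e.
Proof.
move=> d0 Hw; have d2 : 0 < d / 2 by rewrite divr_gt0.
have hd : `|d / 2| < d by rewrite gtr0_norm //; lra.
have hd' : `|- (d / 2)| < d by rewrite normrN.
have := Hw _ hd; have := Hw _ hd'; rewrite normrN gtr0_norm // => A B.
rewrite ler_norml; apply/andP; split; rewrite -(ler_pM2l d2); nra.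
Qed.

Section Euclidean.
Variables (R : realType) (n : nat).
Local Notation V := 'rV[R]_n.

Lemma dotvNl (u w : V) : dotv (- u) w = - dotv u w.
Proof. by rewrite /dotv -sumrN; apply: eq_bigr => i _; rewrite mxE mulNr. Qed.

Lemma dotvBl (u v w : V) : dotv (u - v) w = dotv u w - dotv v w.
Proof. by rewrite /dotv -sumrB; apply: eq_bigr => i _; rewrite !mxE mulrBl. Qed.

Lemma dotvZr (u w : V) a : dotv u (a *: w) = a * dotv u w.
Proof. by rewrite /dotv mulr_sumr; apply: eq_bigr => i _; rewrite !mxE mulrCA. Qed.

Lemma dotv_delta (u : V) j : dotv u (delta_mx 0 j) = u 0 j.
Proof.
rewrite /dotv (bigD1 j) //= big1 ?addr0; first by rewrite mxE !eqxx mulr1.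
by move=> i ij; rewrite mxE (negbTE ij) andbF mulr0.
Qed.

Lemma norm_delta_mx_le1 (j : 'I_n) : `|delta_mx 0 j : V| <= 1.
Proof.
rewrite [leLHS]/Num.norm /= mx_normrE; apply: bigmax_le => // -[a b] _ /=.
by rewrite mxE; case: (_ && _); rewrite ?normr1 ?normr0.
Qed.

Lemma dotv_minorant_eq0 (u : V) :
  (forall eps : R, 0 < eps -> \forall h \near (0 : V), - (eps * `|h|) <= dotv u h) ->
  u = 0.
Proof.
move=> Hu; apply/rowP => j; rewrite mxE; apply/eqP.
rewrite -normr_eq0 eq_le normr_ge0 andbT; apply/unstable.ler_gtP => eps e0.
have [d d0 Hd] := iffLR nbhs_norm0P (Hu _ e0).
apply: (normr_le_of_linear_minorant d0) => t td.
have Nt : `|t *: (delta_mx 0 j : V)| <= `|t|.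
  by rewrite normrZ -[leRHS]mulr1 ler_wpM2l // norm_delta_mx_le1.
have := Hd _ (le_lt_trans Nt td); rewrite /= dotvZr dotv_delta.
by apply: le_trans; rewrite lerN2 ler_wpM2l // ltW.
Qed.

Lemma diff_grad_dotv (f : V -> R) x : differentiable f x ->
  forall h, 'd f x h = dotv (grad f x) h.
Proof.
move=> df h; rewrite {1}[h]row_sum_delta linear_sum /dotv.
by apply: eq_bigr => i _; rewrite linearZ /= mxE mulrC.
Qed.

Lemma differentiable_grad_approx (f : V -> R) x : differentiable f x ->
  forall eps : R, 0 < eps ->
  \forall h \near (0 : V), `|f (x + h) - f x - dotv (grad f x) h| <= eps * `|h|.
Proof.
move=> df eps e0; have /eqadd_some_oP /(_ eps e0) := diff_locally df.
apply: filterS => h /=.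
by rewrite !fctE /= opprD addrA -diff_grad_dotv // [x + h]addrC.
Qed.

Lemma frechet_subgrad_grad (f : V -> R) x :
  differentiable f x -> frechet_subgrad f x (grad f x).
Proof.
move=> df eps e0; apply/nbhs0P.
apply: filterS (differentiable_grad_approx df e0) => h.
rewrite [x + h]addrC addrK ler_norml => /andP[]; lra.
Qed.

Lemma frechet_subgrad_differentiable_uniq (f : V -> R) x v :
  differentiable f x -> frechet_subgrad f x v -> v = grad f x.
Proof.
move=> df fv; apply/esym/eqP; rewrite -subr_eq0; apply/eqP/dotv_minorant_eq0.
move=> eps e0; have e2 : 0 < eps / 2 by rewrite divr_gt0.
have := fv _ e2 => /nbhs0P Hv.
apply: filterS (filterI Hv (differentiable_grad_approx df e2)) => h [].
rewrite [x + h]addrC addrK ler_norml dotvBl => A /andP[_ B]; lra.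
Qed.

Lemma limiting_subgrad_C1 (f : V -> R) xb vb :
  C1 f -> limiting_subgrad f xb vb -> vb = grad f xb.
Proof.
move=> [fd fgc] [xs [vs [Hx _ Hv Hk]]].
have -> : vb = lim (vs @ \oo) by rewrite (cvg_lim _ Hv).
have -> : vs = grad f \o xs.
  by apply/funext => k; apply: frechet_subgrad_differentiable_uniq (fd _) (Hk k).
exact: cvg_lim (cvg_comp _ _ Hx (fgc xb)).
Qed.

Lemma weakly_convex_left_Phi_convex (phi psi f : V -> R) :
  C1 f -> a_weakly_convex phi psi f ->
  left_Phi_convex (fun x y : V => - phi (x - y)) f.
Proof.
move=> [fd fgc] aw; pose z xb := grad psi (- grad f xb).
exists V, (fun xb => xb - z xb), (fun xb => (- f xb - phi (z xb))%:E) => x.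
apply/eqP; rewrite eq_le; apply/andP; split.
  apply: ereal_sup_ubound; exists x => //=.
  by rewrite -EFinB opprB addrCA subrr addr0; congr EFin; lra.
apply: ge_ereal_sup => _ [xb _ <-] /=; rewrite -EFinB lee_fin.
have L : limiting_subgrad f xb (grad f xb).
  exists (fun=> xb), (fun=> grad f xb); split; try exact: cvg_cst.
  by move=> _; apply: frechet_subgrad_grad.
have := aw xb _ L x; rewrite -/(z xb).
by rewrite opprB addrCA addrC; lra.
Qed.

Lemma frechet_subgrad_of_support (phi f : V -> R) xb z :
  differentiable phi z ->
  (forall x, phi z - phi (z + (x - xb)) <= f x - f xb) ->
  frechet_subgrad f xb (- grad phi z).
Proof.
move=> dphi Hs eps e0; apply/nbhs0P.
apply: filterS (differentiable_grad_approx dphi e0) => h.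
rewrite ler_norml dotvNl => /andP[_ A].
have := Hs (xb + h); rewrite [xb + h]addrC addrK; lra.
Qed.


Lemma convex_supercoercive_radial_drop (phi : V -> R) (rho : R) :
  convex_fun phi -> supercoercive phi -> 0 < rho ->
  exists2 C, 0 < C &
    forall w : V, C < `|w| -> phi ((1 - rho / `|w|) *: w) + 2 <= phi w.
Proof.
move=> cvx sc rho0; have [r Hr] := sc (2 / rho + 1).
exists (Num.max r (Num.max rho (phi 0))); first by rewrite !lt_max rho0 orbT.
move=> w; rewrite !gt_max => /and3P[rw rhow p0w].
have w0 : 0 < `|w| by lra.
set a := rho / `|w|.
have a0 : 0 < a by rewrite divr_gt0.
have aw : a * `|w| = rho by rewrite /a mulrVK // unitfE gt_eqF.
have a1 : a < 1 by rewrite /a ltr_pdivrMr // mul1r.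
have conv : phi ((1 - a) *: w) <= (1 - a) * phi w + a * phi 0.
  have := cvx w 0 (1 - a); rewrite scaler0 addr0 opprB addrCA subrr addr0.
  by apply; apply/andP; split; lra.
have growth : 2 + rho <= a * phi w.
  have := ler_wpM2l (ltW a0) (Hr w rw).
  by rewrite mulrCA aw mulrDl mulfVK ?mul1r // gt_eqF.
have phi0 : a * phi 0 < rho by rewrite -aw ltr_pM2l.
lra.
Qed.

Section LeftPhiConvex.
Variables (phi f : V -> R) (I : Type) (y : I -> V) (beta : I -> \bar R).
Hypothesis f_sup : forall x,
  (f x)%:E = ereal_sup [set ((- phi (x - y i))%:E - beta i)%E | i in [set: I]].

Lemma Phi_minorant_le i b : beta i = b%:E -> forall x, - phi (x - y i) - b <= f x.
Proof.
move=> bi x; rewrite -lee_fin f_sup EFinB -bi.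
by apply: ereal_sup_ubound; exists i.
Qed.

Variable xb : V.

Definition near_active (eps : R) : set V := [set z | exists i b,
  [/\ y i = z, beta i = b%:E & f xb - eps < - phi (xb - z) - b]].

Lemma near_active_nonempty eps : 0 < eps -> near_active eps !=set0.
Proof.
move=> e0.
have : ((f xb - eps)%:E < ereal_sup [set ((- phi (xb - y i))%:E - beta i)%E | i in setT])%E.
  by rewrite -f_sup lte_fin ltrBlDr ltrDl.
move=> /ereal_sup_gt [_ [i _ <-]].
case Eb: (beta i) => [b| |].
- by move=> H; exists (y i), i, b; split => //; rewrite -lte_fin EFinB.
- by rewrite /= addeNy.
- have : ((- phi (xb - y i))%:E - beta i <= (f xb)%:E)%E.
    by rewrite f_sup; apply: ereal_sup_ubound; exists i.
  by rewrite Eb.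
Qed.

Definition near_active_filter := filter_from [set e : R | 0 < e] near_active.

Lemma near_active_filter_proper : ProperFilter near_active_filter.
Proof.
apply: filter_from_proper; last by move=> e; apply: near_active_nonempty.
apply: filter_from_filter; first by exists 1 => /=.
move=> e1 e2 /= e10 e20; exists (Num.min e1 e2); first by rewrite /= lt_min e10 e20.
move=> z [i [b [yi bi Hz]]].
have m1 : Num.min e1 e2 <= e1 by rewrite ge_min lexx.
have m2 : Num.min e1 e2 <= e2 by rewrite ge_min lexx orbT.
by split; exists i, b; split => //; lra.
Qed.

Lemma cluster_touching_minorant ys : continuous phi ->
  cluster near_active_filter ys ->
  forall x, phi (xb - ys) - phi (x - ys) <= f x - f xb.
Proof.
move=> phi_cont Hcl x; apply/ler_addgt0Pr => e e0.
have shift (c : V) : (fun u : V => c - u) @ ys --> c - ys.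
  exact: (@cvgB _ V _ (nbhs ys) _ (fun=> c) id c ys (cvg_cst c) cvg_id).
have : (fun u => phi (xb - u) - phi (x - u)) @ ys --> phi (xb - ys) - phi (x - ys).
  exact: cvgB (cvg_comp _ _ (shift xb) (phi_cont _))
              (cvg_comp _ _ (shift x) (phi_cont _)).
have e2 : 0 < e / 2 by rewrite divr_gt0.
move=> /cvgrPdist_lt /(_ _ e2) near_ys.
have active : near_active_filter (near_active (e / 2)) by exists (e / 2).
have [u [[i [b [<- bi Hu]]] /=]] := Hcl _ _ active near_ys.
have := Phi_minorant_le bi x.
rewrite ltr_norml => Hmin /andP[]; lra.
Qed.

Hypotheses (phi_convex : convex_fun phi) (phi_sc : supercoercive phi)
  (f_cont : {for xb, continuous f}).

Lemma near_active_bounded : exists C, forall z, near_active 1 z -> `|xb - z| <= C.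
Proof.
have : \forall h \near (0 : V), f (xb + h) < f xb + 1.
  have /cvgrPdist_lt /(_ 1 ltr01) /nbhs0P := f_cont.
  by apply: filterS => h; rewrite ltr_norml => /andP[]; lra.
move=> /(iffLR nbhs_norm0P) [d /= d0 Hd].
have d2 : 0 < d / 2 by rewrite divr_gt0.
have [C C0 HC] := convex_supercoercive_radial_drop phi_convex phi_sc d2.
exists C => z [i [b [<- bi Hz]]]; rewrite leNgt; apply/negP => Cw.
have w0 : 0 < `|xb - y i| by apply: lt_trans Cw.
have := HC _ Cw; set w := xb - y i; set a := d / 2 / `|w| => drop.
have := Phi_minorant_le bi (xb - a *: w).
have -> : xb - a *: w - y i = (1 - a) *: w by rewrite scalerBl scale1r addrAC.
have : f (xb - a *: w) < f xb + 1.
  apply: Hd; rewrite /= normrN normrZ gtr0_norm ?divr_gt0 // mulfVK ?gt_eqF //; lra.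
lra.
Qed.

Lemma near_active_cluster : exists ys, cluster near_active_filter ys.
Proof.
have [C HC] := near_active_bounded.
pose r := Num.max C 0 + 1.
have Cr : C < r by rewrite /r ltr_pwDr // le_max lexx.
have r0 : 0 < r by rewrite /r ltr_pwDr // le_max lexx orbT.
have cA : compact (closed_ball xb r).
  apply: bounded_closed_compact; last exact: closed_ball_closed.
  exists (`|xb| + r); split; first by rewrite num_real.
  move=> M HM z; rewrite closed_ballE // /closed_ball_ /= => Hz.
  have := ler_normB xb (xb - z); rewrite opprB addrCA subrr addr0; lra.
have FA : near_active_filter (closed_ball xb r).
  exists 1 => //= z /HC Cz; rewrite closed_ballE // /closed_ball_ /=; lra.
have [ys [_ Hcl]] := cA _ near_active_filter_proper FA.
by exists ys.
Qed.

End LeftPhiConvex.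

Lemma left_Phi_convex_weakly_convex (phi psi f : V -> R) :
  standing phi psi -> C1 f ->
  left_Phi_convex (fun x y : V => - phi (x - y)) f -> a_weakly_convex phi psi f.
Proof.
move=> [[phi_cvx phi_d _ phi_sc] _ _ gpsi_phi _] f_C1 [I [y [beta f_sup]]] xb vb lim x.
have [f_d _] := f_C1.
have phi_cont : continuous phi by move=> p; apply: differentiable_continuous.
have [ys Hys] := near_active_cluster f_sup phi_cvx phi_sc (differentiable_continuous (f_d xb)).
have touch := cluster_touching_minorant f_sup phi_cont Hys.
have : frechet_subgrad f xb (- grad phi (xb - ys)).
  apply: frechet_subgrad_of_support (phi_d _) _ => x'.
  by rewrite [xb - ys + _]addrC addrA subrK; apply: touch.
rewrite (limiting_subgrad_C1 f_C1 lim).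
move=> /(frechet_subgrad_differentiable_uniq (f_d xb)) <-.
rewrite opprK gpsi_phi addrA subrK.
have := touch x; lra.
Qed.

End Euclidean.

Theorem mainTheorem12 (R : realType) (n : nat) (phi psi f : 'rV[R]_n -> R) :
  standing phi psi -> C1 f ->
  (a_weakly_convex phi psi f <->
   left_Phi_convex (fun x y : 'rV[R]_n => - phi (x - y)) f).
Proof.
move=> st f_C1; split; first exact: weakly_convex_left_Phi_convex.
exact: left_Phi_convex_weakly_convex.
Qed.
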